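(* With notation as in the context (type $E_7$), $\Gamma_7^+$ is exactly the set of $abc\in V$ such that exactly one of $a=0$, $b=0$, $c=0$ holds.
   Context: Let $F=\{0,1,2,3\}$ be the group $\mathbb{Z}/2\times\mathbb{Z}/2$ with operation $\oplus$ (binary addition without carry) and symplectic form $(a|a')=0$ if $a=0$, $a'=0$ or $a=a'$, and $1$ otherwise. Let $V=F^3$ (elements written $abc$), with coordinatewise $\oplus$ and form $(abc|a'b'c')=(a|a')+(b|b')+(c|c')\in\mathbb{Z}/2$. Let $\Delta$ be the $E_7$ root system with simple roots $\alpha_1,\dots,\alpha_7$, $\langle\alpha_i,\alpha_i\rangle=2$, $\langle\alpha_i,\alpha_j\rangle=-1$ for $\{i,j\}\in\{\{1,3\},\{3,4\},\{4,5\},\{5,6\},\{6,7\},\{2,4\}\}$, $0$ otherwise; $\Lambda=\bigoplus\mathbb{Z}\alpha_i$, $\Delta^+$ the positive roots. Let $f:\Lambda\to V$ be the homomorphism with $f(\alpha_1)=100$, $f(\alpha_2)=030$, $f(\alpha_3)=300$, $f(\alpha_4)=111$, $f(\alpha_5)=003$, $f(\alpha_6)=001$, $f(\alpha_7)=033$. Let $\Delta_7^+$ be the set of positive roots $\beta=\sum\beta^i\alpha_i$ with $\beta^7\neq0$, and $\Gamma_7^+=f(\Delta_7^+)$. *)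

From mathcomp Require Import all_boot all_order all_algebra.
Set Implicit Arguments. Unset Strict Implicit. Unset Printing Implicit Defensive.
Import Order.TTheory GRing.Theory Num.Theory.
Local Open Scope ring_scope.

(* F = Z/2 x Z/2 encoded as {0,1,2,3}, with (+) = bitwise xor. *)
Definition F := 'I_4.
Definition Fxor (a b : F) : F := inord (Nat.lxor a b).
Definition F0 : F := inord 0.

Definition V := (F * F * F)%type.
Definition Vxor (u v : V) : V :=
  (Fxor u.1.1 v.1.1, Fxor u.1.2 v.1.2, Fxor u.2 v.2).
Definition V0 : V := (F0, F0, F0).
Definition mkV (a b c : nat) : V := (inord a, inord b, inord c).

(* Root lattice Lambda = Z^7 in the basis of simple roots; index i : 'I_7
   stands for the paper's alpha_(i+1). *)
Definition Lam := {ffun 'I_7 -> int}.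
Definition alpha (i : 'I_7) : Lam := [ffun j => (i == j)%:Z].

(* E7 Cartan matrix <alpha_i, alpha_j> with the paper's (1-based) edges. *)
Definition e7_edge (p q : nat) : bool :=
  [|| (p, q) == (1, 3), (p, q) == (3, 4), (p, q) == (4, 5), (p, q) == (5, 6),
      (p, q) == (6, 7) | (p, q) == (2, 4)]%N.
Definition cartan (i j : 'I_7) : int :=
  if i == j then 2 else if e7_edge i.+1 j.+1 || e7_edge j.+1 i.+1 then -1 else 0.

Definition form (x y : Lam) : int :=
  \sum_(i < 7) \sum_(j < 7) x i * y j * cartan i j.

Definition refl (i : 'I_7) (x : Lam) : Lam :=
  [ffun j => x j - form x (alpha i) * alpha i j].

Inductive is_root : Lam -> Prop :=
| root_simple i : is_root (alpha i)
| root_refl i x : is_root x -> is_root (refl i x).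

Definition is_pos (x : Lam) : bool := [forall i, 0 <= x i].
Definition in_Delta7pos (x : Lam) : Prop :=
  is_root x /\ is_pos x /\ x (inord 6) != 0.

Definition f_alpha (i : 'I_7) : V :=
  match nat_of_ord i with
  | 0 => mkV 1 0 0
  | 1 => mkV 0 3 0
  | 2 => mkV 3 0 0
  | 3 => mkV 1 1 1
  | 4 => mkV 0 0 3
  | 5 => mkV 0 0 1
  | _ => mkV 0 3 3
  end%N.

(* The homomorphism f : Lambda -> V.  Since V has exponent 2,
   f(sum b_i alpha_i) = (+)_{i : b_i odd} f(alpha_i). *)
Definition f (x : Lam) : V :=
  foldr Vxor V0 [seq (if odd `|x i|%N then f_alpha i else V0) | i <- enum 'I_7].

Definition exactly_one_zero (v : V) : bool :=
  (((v.1.1 == F0) : nat) + ((v.1.2 == F0) : nat) + ((v.2 == F0) : nat) == 1)%N.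

From Pilot Require Import Defs.
From mathcomp Require Import all_boot all_order all_algebra.
Set Implicit Arguments. Unset Strict Implicit. Unset Printing Implicit Defensive.
Import Order.TTheory GRing.Theory Num.Theory.
Local Open Scope ring_scope.

(* In coordinates, Delta is the closure of the unit vectors under the simple
   reflections.  This closure is computed (126 vectors): it contains every root
   because it is certified closed under the reflections, and each of its
   vectors is a root because it was reached by reflections.  Applying f to its
   positive vectors with nonzero alpha_7-coefficient gives a finite set, which
   is compared by exhaustion over V with the 27 vectors having exactly one zero
   coordinate. *)

(* [inZp] rather than [inord]: the latter is stuck under [vm_compute]. *)
Definition ords7 : seq 'I_7 := [seq inZp k | k <- iota 0 7].

Lemma ords7E : ords7 = enum 'I_7.
Proof. by apply: (inj_map val_inj); rewrite val_enum_ord. Qed.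

Definition coords (x : Lam) : seq int := [seq x i | i <- enum 'I_7].

Lemma nth_coords (x : Lam) (i : 'I_7) : (coords x)`_i = x i.
Proof. by rewrite (nth_map i) ?size_enum_ord // nth_ord_enum. Qed.

Definition unit_coords (i : 'I_7) : seq int :=
  [seq (i == j)%:Z | j : 'I_7 <- ords7].

Definition pairing (r : seq int) (i : 'I_7) : int :=
  foldr +%R 0 [seq r`_j * cartan j i | j : 'I_7 <- ords7].

(* The [let] makes [vm_compute] evaluate the pairing once, not 7 times. *)
Definition refl_coords (i : 'I_7) (r : seq int) : seq int :=
  let c := pairing r i in [seq r`_j - c * (i == j)%:Z | j : 'I_7 <- ords7].

Lemma coords_alpha (i : 'I_7) : coords (alpha i) = unit_coords i.
Proof. by rewrite /unit_coords ords7E; apply: eq_map => j; rewrite ffunE. Qed.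

Lemma form_alpha (x : Lam) (i : 'I_7) :
  Defs.form x (alpha i) = pairing (coords x) i.
Proof.
rewrite /pairing foldrE big_map ords7E big_enum /=; apply: eq_bigr => j _.
rewrite nth_coords (bigD1 i) //= big1 => [|k ki]; rewrite ffunE.
  by rewrite eqxx mulr1 addr0.
by rewrite eq_sym (negbTE ki) mulr0 mul0r.
Qed.

Lemma coords_refl (i : 'I_7) (x : Lam) :
  coords (refl i x) = refl_coords i (coords x).
Proof.
rewrite /refl_coords -form_alpha ords7E; apply: eq_map => j.
by rewrite !ffunE nth_coords.
Qed.

Definition grow (rs : seq (seq int)) : seq (seq int) :=
  let new := [seq refl_coords i s | s <- rs, i <- ords7] in
  rs ++ undup [seq r <- new | r \notin rs].

Lemma sub_iter_grow (n : nat) (rs : seq (seq int)) :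
  {subset rs <= iter n grow rs}.
Proof. by elim: n => //= n IH r /IH; rewrite mem_cat => ->. Qed.

(* 17 rounds reach the lowest root, of height -17. *)
Definition E7_coords : seq (seq int) := iter 17 grow (map unit_coords ords7).

Definition refl_closed (rs : seq (seq int)) : bool :=
  all (fun r => all (fun i => refl_coords i r \in rs) ords7) rs.

Lemma refl_closed_mem (rs : seq (seq int)) :
  refl_closed rs -> {in rs, forall r i, refl_coords i r \in rs}.
Proof.
by move=> /allP closed r /closed /allP + i; apply; rewrite ords7E mem_enum.
Qed.

Lemma E7_coords_refl_closed : refl_closed E7_coords.
Proof. by vm_compute. Qed.

Lemma root_coords_mem (x : Lam) : is_root x -> coords x \in E7_coords.
Proof.
elim=> [i | i y _ y_in]; rewrite ?coords_alpha ?coords_refl.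
  by apply: (sub_iter_grow 17); apply: map_f; rewrite ords7E mem_enum.
exact: (refl_closed_mem E7_coords_refl_closed).
Qed.

Lemma grow_realized (rs : seq (seq int)) :
  {in rs, forall r, exists2 x : Lam, is_root x & coords x = r} ->
  {in grow rs, forall r, exists2 x : Lam, is_root x & coords x = r}.
Proof.
move=> realized r; rewrite mem_cat mem_undup mem_filter.
case/orP=> [/realized // |].
case/andP=> _ /allpairsP [[s i] [/= /realized [x root_x <-] _ ->]].
by exists (refl i x); [exact: root_refl | exact: coords_refl].
Qed.

Lemma mem_E7_coords (r : seq int) :
  r \in E7_coords -> exists2 x : Lam, is_root x & coords x = r.
Proof.
rewrite /E7_coords; elim: 17%N r => [|n IH] r; last exact: grow_realized.
case/mapP=> i _ ->.
by exists (alpha i); [exact: root_simple | exact: coords_alpha].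
Qed.

(* Elements of V are evaluated through their values in nat, since [Fxor], [F0]
   and [f_alpha] are built with [inord]. *)
Definition triple := (nat * nat * nat)%type.

Definition vval (v : V) : triple := (v.1.1 : nat, v.1.2 : nat, v.2 : nat).

Lemma vval_inj : injective vval.
Proof. by move=> [[a b] c] [[a' b'] c'] [/ord_inj-> /ord_inj-> /ord_inj->]. Qed.

Definition xor3 (s t : triple) : triple :=
  (Nat.lxor s.1.1 t.1.1, Nat.lxor s.1.2 t.1.2, Nat.lxor s.2 t.2).

Lemma lxor_lt4 (a b : nat) : (a < 4)%N -> (b < 4)%N -> (Nat.lxor a b < 4)%N.
Proof. by case: a => [|[|[|[|a]]]] //; case: b => [|[|[|[|b]]]]. Qed.

Lemma val_Fxor (a b : F) : Fxor a b = Nat.lxor a b :> nat.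
Proof. by rewrite inordK // lxor_lt4. Qed.

Lemma vval_V0 : vval V0 = (0, 0, 0)%N.
Proof. by rewrite /vval /= inordK. Qed.

Lemma vval_Vxor (u v : V) : vval (Vxor u v) = xor3 (vval u) (vval v).
Proof. by rewrite /vval /= !val_Fxor. Qed.

Definition f_alpha3 (i : nat) : triple :=
  match i with
  | 0 => (1, 0, 0) | 1 => (0, 3, 0) | 2 => (3, 0, 0) | 3 => (1, 1, 1)
  | 4 => (0, 0, 3) | 5 => (0, 0, 1) | _ => (0, 3, 3)
  end%N.

Lemma vval_f_alpha (i : 'I_7) : vval (f_alpha i) = f_alpha3 i.
Proof.
by case: i => [[|[|[|[|[|[|[|k]]]]]]] hi] //; rewrite /vval /= !inordK.
Qed.

Definition f3 (r : seq int) : triple :=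
  foldr xor3 (0, 0, 0)%N
    [seq if odd (absz r`_i) then f_alpha3 i else (0, 0, 0)%N
    | i : 'I_7 <- ords7].

Lemma vval_f (x : Lam) : vval (f x) = f3 (coords x).
Proof.
rewrite /f /f3 ords7E; elim: (enum 'I_7) => [|i s IH] /=; first exact: vval_V0.
rewrite vval_Vxor IH nth_coords; congr xor3.
by case: ifP => _; [exact: vval_f_alpha | exact: vval_V0].
Qed.

Definition one_zero3 (t : triple) : bool :=
  ((t.1.1 == 0)%N + (t.1.2 == 0)%N + (t.2 == 0)%N == 1)%N.

Lemma exactly_one_zeroE (v : V) : exactly_one_zero v = one_zero3 (vval v).
Proof. by rewrite /exactly_one_zero /F0 -!val_eqE /= inordK. Qed.

Definition Delta7pos_coords (r : seq int) : bool :=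
  all (fun c => 0 <= c) r && (r`_6 != 0).

Lemma in_Delta7posE (x : Lam) :
  in_Delta7pos x <-> is_root x /\ Delta7pos_coords (coords x).
Proof.
have pos_coords : is_pos x = all (fun c => 0 <= c) (coords x).
  apply/forallP/allP => [pos_x _ /mapP [i _ ->] // | pos_x i].
  exact/pos_x/map_f/mem_enum.
have x6 : x (inord 6) = (coords x)`_6.
  by rewrite -(nth_coords x (inord 6)) inordK.
rewrite /in_Delta7pos /Delta7pos_coords pos_coords x6.
by split=> [[? [-> ->]] | [? /andP []]].
Qed.

Definition Gamma7 : seq triple :=
  [seq f3 r | r <- E7_coords & Delta7pos_coords r].

Lemma Gamma7P (v : V) :
  (exists x : Lam, in_Delta7pos x /\ f x = v) <-> vval v \in Gamma7.
Proof.
rewrite /Gamma7; split=> [[x [/in_Delta7posE [root_x pos_x] <-]] | /mapP [r]].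
  by rewrite vval_f; apply: map_f; rewrite mem_filter pos_x root_coords_mem.
rewrite mem_filter => /andP [pos_r /mem_E7_coords [x root_x xr]] fx; subst r.
exists x; split; first exact/in_Delta7posE.
by apply: vval_inj; rewrite vval_f.
Qed.

Definition triples4 : seq triple :=
  let pairs := [seq (a, b) | a <- iota 0 4, b <- iota 0 4] in
  [seq (ab, c) | ab <- pairs, c <- iota 0 4].

Lemma vval_triples4 (v : V) : vval v \in triples4.
Proof. by rewrite !allpairs_f // mem_iota /=. Qed.

Definition equals_one_zero3 (g : seq triple) : bool :=
  all (fun t => (t \in g) == one_zero3 t) triples4.

Lemma Gamma7_one_zero : equals_one_zero3 Gamma7.
Proof. by vm_compute. Qed.

Theorem mainTheorem6 (v : V) :
  (exists x : Lam, in_Delta7pos x /\ f x = v) <-> exactly_one_zero v.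
Proof.
rewrite exactly_one_zeroE -(eqP (allP Gamma7_one_zero _ (vval_triples4 v))).
exact: Gamma7P.
Qed.
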